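(* Let $n\ge2$, let $X\subset\mathbb{R}^n$ be finite, let $\epsilon>0$ and $A\subset X$. If $r\in\mathbb{N}\cup\{0\}$, then $(\bar A)^r=\operatorname{int}(A)\cup(\partial A)^r$.
   Context: $\mathcal{Q}=\mathcal{Q}(\epsilon)$ is the collection of closed cubes $\{x\in\mathbb{R}^n: j_i\frac{\epsilon}{2\sqrt n}\le x_i\le (j_i+1)\frac{\epsilon}{2\sqrt n},\ i=1,\dots,n\}$, $j\in\mathbb{Z}^n$. For a cube $S\in\mathcal{Q}$ and integer $m\ge0$, $S^m=\{x\in\mathbb{R}^n:\max_i|x_i-s_i|\le m\frac{\epsilon}{2\sqrt n}\text{ for some }s\in S\}$. For $B\subset\mathbb{R}^n$, $\mathcal{I}(B)=\{S\in\mathcal{Q}: S\cap B\ne\emptyset\}$. A cube $S\in\mathcal{I}(A)$ is an interior cube of $A$ if $S^1\cap X\subset A$ and every cube $T\in\mathcal{Q}$ with $T\subset S^1$ lies in $\mathcal{I}(A)$; otherwise $S\in\mathcal{I}(A)$ is a boundary cube of $A$. $\operatorname{int}(A)$ is the union of the interior cubes of $A$, $\partial A$ is the union of the boundary cubes of $A$, and $\bar A=\operatorname{int}(A)\cup\partial A=\bigcup_{S\in\mathcal{I}(A)}S$. For $Y\subset\mathbb{R}^n$ and integer $N\ge0$, the $N$-extension is $Y^N=\bigcup_{S\in\mathcal{I}(Y)}S^N$. *)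

From HB Require Import structures.
From mathcomp Require Import all_boot all_order all_algebra.
From mathcomp Require Import boolp classical_sets functions cardinality reals.
Set Implicit Arguments. Unset Strict Implicit. Unset Printing Implicit Defensive.
Import Order.TTheory GRing.Theory Num.Theory.
Local Open Scope ring_scope.
Local Open Scope classical_set_scope.

(* Points of R^n are functions 'I_n -> R.  A cube of the grid Q(eps) is
   indexed by j : 'I_n -> int (j in Z^n). *)
Section Grid.
Variables (R : realType) (n : nat) (eps : R).

Definition side : R := eps / (2 * Num.sqrt (n%:R)).

Definition cube (j : 'I_n -> int) : set ('I_n -> R) :=
  [set x | forall i, (j i)%:~R * side <= x i /\ x i <= (j i + 1)%:~R * side].

Definition cube_ext (m : nat) (j : 'I_n -> int) : set ('I_n -> R) :=
  [set x | exists s, cube j s /\ forall i, `|x i - s i| <= m%:R * side].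

Definition meets (B : set ('I_n -> R)) (j : 'I_n -> int) : Prop :=
  cube j `&` B !=set0.

Definition interior_cube (X A : set ('I_n -> R)) (j : 'I_n -> int) : Prop :=
  meets A j /\ (cube_ext 1 j `&` X `<=` A) /\
  (forall k, cube k `<=` cube_ext 1 j -> meets A k).

Definition boundary_cube (X A : set ('I_n -> R)) (j : 'I_n -> int) : Prop :=
  meets A j /\ ~ interior_cube X A j.

Definition int_set (X A : set ('I_n -> R)) : set ('I_n -> R) :=
  \bigcup_(j in interior_cube X A) cube j.

Definition bd_set (X A : set ('I_n -> R)) : set ('I_n -> R) :=
  \bigcup_(j in boundary_cube X A) cube j.

Definition closure_set (A : set ('I_n -> R)) : set ('I_n -> R) :=
  \bigcup_(j in meets A) cube j.

Definition extension (Y : set ('I_n -> R)) (N : nat) : set ('I_n -> R) :=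
  \bigcup_(j in meets Y) cube_ext N j.
End Grid.

From Pilot Require Import Defs.
From HB Require Import structures.
From mathcomp Require Import all_boot all_order all_algebra.
From mathcomp Require Import boolp classical_sets functions cardinality reals.
From mathcomp Require Import zify ring lra.
Import Order.TTheory GRing.Theory Num.Theory.
Set Implicit Arguments. Unset Strict Implicit. Unset Printing Implicit Defensive.
Local Open Scope ring_scope.
Local Open Scope classical_set_scope.

(* Let x be within sup-distance r * side of a point p of a cube T meeting the
   closure of A.  A cube adjacent to an interior cube of A meets A, so it is
   either interior or a boundary cube; hence T is interior unless it meets the
   boundary.  Walk from p to x in r + 1 steps of length at most side: the
   grid cells of consecutive points are adjacent, so either some cell along
   the walk meets the boundary, and x is within r * side of a point of it, or
   they are all interior, including the cell of x. *)

Section GridLine.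
Variable R : realType.
Implicit Types (a b : int) (t u v : R).

Lemma intr_lt_add2 a b : a%:~R < b%:~R + 2 :> R -> a <= b + 1.
Proof.
have -> : b%:~R + 2 = (b + 2)%:~R :> R by rewrite intrD.
by rewrite ltr_int; lia.
Qed.

Lemma grid_adjacent_of_lt a b t :
  0 < t -> a%:~R * t < (b%:~R + 2) * t -> b%:~R * t < (a%:~R + 2) * t ->
  `|a - b| <= 1.
Proof.
move=> t0; rewrite !ltr_pM2r // => /intr_lt_add2 ab /intr_lt_add2 ba.
by rewrite ler_distl; lia.
Qed.

Lemma grid_adjacent_of_common_point a b t u :
  0 < t -> a%:~R * t <= u <= (a%:~R + 1) * t ->
  b%:~R * t <= u <= (b%:~R + 1) * t ->
  `|a - b| <= 1.
Proof.
move=> t0 /andP[au ua] /andP[bu ub].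
by apply: grid_adjacent_of_lt => //; nra.
Qed.

Lemma floor_mul_itv t u :
  0 < t -> (Num.floor (u / t))%:~R * t <= u < ((Num.floor (u / t))%:~R + 1) * t.
Proof.
move=> t0; have /andP[fl1 fl2] := floor_itv (u / t).
by rewrite -ler_pdivlMr // -ltr_pdivrMr // fl1; rewrite intrD in fl2.
Qed.

Lemma floor_mul_adjacent t u v :
  0 < t -> `|u - v| <= t -> `|Num.floor (u / t) - Num.floor (v / t)| <= 1.
Proof.
move=> t0; rewrite ler_distl => /andP[uv1 uv2].
have /andP[u1 u2] := floor_mul_itv u t0; have /andP[v1 v2] := floor_mul_itv v t0.
by apply: grid_adjacent_of_lt => //; nra.
Qed.

Lemma grid_near_cell a b t u :
  0 < t -> `|a - b| <= 1 -> b%:~R * t <= u <= (b%:~R + 1) * t ->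
  exists v, a%:~R * t <= v <= (a%:~R + 1) * t /\ `|u - v| <= t.
Proof.
move=> t0; rewrite ler_distl => /andP[ab1 ab2] /andP[bu ub].
have {}ab1 : b%:~R <= (a + 1)%:~R :> R by rewrite ler_int; lia.
have {}ab2 : a%:~R <= (b + 1)%:~R :> R by rewrite ler_int; lia.
rewrite intrD in ab1 ab2.
have [ua|au] := ltP u (a%:~R * t).
  by exists (a%:~R * t); rewrite lexx /= ler_distlC; split; nra.
have [au'|ua'] := ltP ((a%:~R + 1) * t) u.
  by exists ((a%:~R + 1) * t); rewrite lexx andbT ler_distlC; split; nra.
by exists u; rewrite au ua' subrr normr0 ltW.
Qed.

End GridLine.

Section Segment.
Variables (R : numFieldType) (I : Type) (p q : I -> R) (m : nat).

Definition segment_point (i : nat) : I -> R :=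
  fun l => p l + i%:R / m.+1%:R * (q l - p l).

Lemma segment_point0 : segment_point 0 = p.
Proof. by apply/funext => l; rewrite /segment_point !mul0r addr0. Qed.

Lemma segment_point_last : segment_point m.+1 = q.
Proof.
apply/funext => l.
by rewrite /segment_point divff ?pnatr_eq0 // mul1r addrC subrK.
Qed.

Lemma segment_point_step i l :
  `|segment_point i l - segment_point i.+1 l| = `|q l - p l| / m.+1%:R.
Proof.
have -> : segment_point i l - segment_point i.+1 l = - ((q l - p l) / m.+1%:R).
  by rewrite /segment_point -natr1; field; rewrite natr1 pnatr_eq0.
by rewrite normrN normrM normfV normr_nat.
Qed.

Lemma segment_point_dist_end i l :
  (i <= m.+1)%N -> `|q l - segment_point i l| <= `|q l - p l|.
Proof.
move=> im; have m0 : 0 < m.+1%:R :> R by rewrite ltr0n.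
have -> : q l - segment_point i l = (1 - i%:R / m.+1%:R) * (q l - p l).
  by rewrite /segment_point; ring.
have i0 : 0 <= i%:R / m.+1%:R :> R by rewrite divr_ge0.
have i1 : i%:R / m.+1%:R <= 1 :> R by rewrite ler_pdivrMr // mul1r ler_nat.
by rewrite normrM ger0_norm ?subr_ge0 // ler_piMl // lerBlDr lerDl.
Qed.
End Segment.

Section Grid.
Variables (R : realType) (n : nat) (eps : R).
Hypothesis side_gt0 : 0 < side n eps.
Local Notation s := (side n eps).
Implicit Types (j k c d : 'I_n -> int) (p q x : 'I_n -> R)
  (A X Y Z : set ('I_n -> R)).

Lemma cubeP j x :
  cube eps j x <-> forall l, (j l)%:~R * s <= x l <= ((j l)%:~R + 1) * s.
Proof.
split=> jx l; have := jx l; rewrite intrD; first by case=> -> ->.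
by case/andP.
Qed.

Lemma cube_corner j : cube eps j (fun l => (j l)%:~R * s).
Proof.
by move=> l; split=> //; rewrite ler_pM2r // ler_int lerDl.
Qed.

Lemma cube_sub_ext m j : cube eps j `<=` cube_ext eps m j.
Proof.
by move=> x jx; exists x; split => // l; rewrite subrr normr0 mulr_ge0 // ltW.
Qed.

Definition adjacent j k : Prop := forall l, `|j l - k l| <= 1.

Lemma adjacent_cube_sub_ext j k :
  adjacent j k -> cube eps k `<=` cube_ext eps 1 j.
Proof.
move=> jk z /cubeP kz.
have /choice[v vP] : forall l, exists w,
    (j l)%:~R * s <= w <= ((j l)%:~R + 1) * s /\ `|z l - w| <= s.
  by move=> l; exact: grid_near_cell.
exists v; split => [|l]; last by rewrite mul1r; case: (vP l).
by apply/cubeP => l; case: (vP l).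
Qed.

Lemma adjacent_of_common_point j k x :
  cube eps j x -> cube eps k x -> adjacent j k.
Proof.
move=> /cubeP jx /cubeP kx l.
exact: grid_adjacent_of_common_point (jx l) (kx l).
Qed.

(* The half-open cell of p: with closed cubes, two points at distance side
   could lie in cubes two steps apart. *)
Definition cube_of p : 'I_n -> int := fun l => Num.floor (p l / s).

Lemma cube_of_in p : cube eps (cube_of p) p.
Proof.
by apply/cubeP => l; have /andP[-> /ltW ->] := floor_mul_itv (p l) side_gt0.
Qed.

Lemma adjacent_cube_of p q :
  (forall l, `|p l - q l| <= s) -> adjacent (cube_of p) (cube_of q).
Proof. by move=> pq l; exact: floor_mul_adjacent. Qed.

Lemma extensionS Y Z r : Y `<=` Z -> extension eps Y r `<=` extension eps Z r.
Proof.
by move=> YZ x [j [y [jy /YZ Zy]] jx]; exists j => //; exists y.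
Qed.

Lemma meets_closure_set A j :
  Defs.meets eps A j -> Defs.meets eps (closure_set eps A) j.
Proof.
by move=> [y [jy Ay]]; exists y; split => //; exists j => //; exists y.
Qed.

Lemma bd_set_sub_closure_set X A : bd_set eps X A `<=` closure_set eps A.
Proof. by move=> x [j [jA _] jx]; exists j. Qed.

Lemma int_set_sub_extension X A r :
  int_set eps X A `<=` extension eps (closure_set eps A) r.
Proof.
move=> x [j [jA _] jx]; exists j; first exact: meets_closure_set.
exact: cube_sub_ext.
Qed.

Lemma boundary_cube_meets_bd_set X A j :
  boundary_cube eps X A j -> Defs.meets eps (bd_set eps X A) j.
Proof.
by move=> jbd; have jc := cube_corner j; eexists; split; [exact: jc | exists j].
Qed.

Lemma adjacent_interior_cube X A c d :
  interior_cube eps X A c -> adjacent c d ->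
  interior_cube eps X A d \/ Defs.meets eps (bd_set eps X A) d.
Proof.
move=> [_ [_ c_nbhd]] cd.
have dA : Defs.meets eps A d by apply: c_nbhd; exact: adjacent_cube_sub_ext.
have [dint|dnint] := pselect (interior_cube eps X A d); first by left.
by right; apply: boundary_cube_meets_bd_set.
Qed.

Lemma closure_cube_interior_or_meets_bd X A j :
  Defs.meets eps (closure_set eps A) j ->
  interior_cube eps X A j \/ Defs.meets eps (bd_set eps X A) j.
Proof.
move=> [y [jy [k kA ky]]].
have [kint|knint] := pselect (interior_cube eps X A k).
  exact: adjacent_interior_cube kint (adjacent_of_common_point ky jy).
by right; exists y; split => //; exists k.
Qed.

Lemma interior_chain X A c (q : nat -> 'I_n -> R) m :
  interior_cube eps X A c -> cube eps c (q 0%N) ->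
  (forall i l, (i < m)%N -> `|q i l - q i.+1 l| <= s) ->
  (exists2 i, (i <= m)%N & Defs.meets eps (bd_set eps X A) (cube_of (q i))) \/
  interior_cube eps X A (cube_of (q m)).
Proof.
move=> cint cq0; elim: m => [|m IH] q_step.
  have cq := adjacent_of_common_point cq0 (cube_of_in (q 0%N)).
  have [q0int|q0bd] := adjacent_interior_cube cint cq; first by right.
  by left; exists 0%N.
have [[i im ibd]|qmint] := IH (fun i l im => q_step i l (ltnW im)).
  by left; exists i => //; exact: leqW.
have qq := adjacent_cube_of (q_step m ^~ (ltnSn m)).
have [qSint|qSbd] := adjacent_interior_cube qmint qq; first by right.
by left; exists m.+1.
Qed.

Lemma extension_closure_set_sub X A r :
  extension eps (closure_set eps A) r `<=`
  int_set eps X A `|` extension eps (bd_set eps X A) r.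
Proof.
move=> x [c cA [p [cp xp]]].
have [cint|cbd] := closure_cube_interior_or_meets_bd X cA; last first.
  by right; exists c => //; exists p.
pose q := segment_point p x r.
have q_step i l : (i < r.+1)%N -> `|q i l - q i.+1 l| <= s.
  move=> _; rewrite segment_point_step ler_pdivrMr ?ltr0n // -natr1 mulrDr mulr1.
  by rewrite (le_trans (xp l)) // mulrC lerDl ltW.
have cq0 : cube eps c (q 0%N) by rewrite /q segment_point0.
have [[i ir ibd]|xint] := interior_chain cint cq0 q_step.
  right; exists (cube_of (q i)) => //.
  exists (q i); split; first exact: cube_of_in.
  by move=> l; apply: le_trans (xp l); exact: segment_point_dist_end.
left; exists (cube_of (q r.+1)) => //.
by rewrite /q segment_point_last; exact: cube_of_in.
Qed.
End Grid.

Lemma side_gt0 (R : realType) (n : nat) (eps : R) :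
  (0 < n)%N -> 0 < eps -> 0 < side n eps.
Proof. by move=> n0 eps0; rewrite divr_gt0 // mulr_gt0 // sqrtr_gt0 ltr0n. Qed.

Theorem lemma4p3 (R : realType) (n : nat) (hn : (2 <= n)%N)
  (X : set ('I_n -> R)) (hX : finite_set X) (eps : R) (heps : 0 < eps)
  (A : set ('I_n -> R)) (hA : A `<=` X) (r : nat) :
  extension eps (closure_set eps A) r =
  int_set eps X A `|` extension eps (bd_set eps X A) r.
Proof.
have s0 : 0 < side n eps by apply: side_gt0 => //; exact: leq_trans hn.
apply/seteqP; split; first exact: extension_closure_set_sub.
rewrite subUset; split; first exact: int_set_sub_extension.
exact/extensionS/bd_set_sub_closure_set.
Qed.
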